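(* In the setting described in the context, under the non-atomic assumption, for any player $i$, any contention windows $W_{-i}$ of the other players, and any $W_i<W_i'$, one has $\widehat S_i(W_i,W_{-i})>\widehat S_i(W_i',W_{-i})$; that is, given any strategies of the others, player $i$ obtains a strictly higher utility by decreasing its contention window.
   Context: Model: users $\mathcal N=\{1,\dots,n\}$, fixed integer $m\ge1$. User $i$ chooses a contention window (CW) $W_i\in\{0,1,2,\dots\}$ and a data rate $R_i\in[R_{min,i},R_{max,i}]$; $e_i$ is its packet error rate function (values in $[0,1]$, increasing in the rate), $G_i(R)=(1-e_i(R))R$. For $x\in[0,1]$, $\Gamma_i(x)=\frac{2}{W_i+1+xW_i\sum_{l=0}^{m-1}(2x)^l}$. Given $(W_j,R_j)_j$, the stationary state $(\tau_j,p_j,q_j)_j$ (assumed unique) solves $q_j=1-(1-p_j)(1-e_j(R_j))$, $\tau_j=\Gamma_j(q_j)$, $p_j=1-\prod_{k\ne j}(1-\tau_k)$; $\rho_j=1-\tau_j$. Utility: $S_i=\frac{(1-\rho_i)\prod_{j\ne i}\rho_j\,G_i(R_i)}{1-\prod_{j}\rho_j}$. For a CW profile $\mathbf W$, $\mathbf R^*(\mathbf W)$ denotes the unique Nash equilibrium of the rate adaptation game in which each player $i$ chooses $R_i\in[R_{min,i},R_{max,i}]$ to maximize $S_i$ with $\mathbf W$ fixed; and $\widehat S_i(\mathbf W)=S_i(\mathbf W,\mathbf R^*(\mathbf W))$ is the utility of player $i$ in the medium access game $G_M$. Non-atomic assumption: the number of users is large, so changing user $i$'s CW and rate leaves the states $(q_j,\tau_j,R_j)$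 of the other users $j\ne i$ unchanged; and $\prod_{j\in\mathcal N}\rho_j\simeq\prod_{j\ne i}\rho_j$. *)

From HB Require Import structures.
From mathcomp Require Import all_boot all_order all_algebra.
Set Implicit Arguments. Unset Strict Implicit. Unset Printing Implicit Defensive.
Import Order.TTheory GRing.Theory Num.Theory.
Local Open Scope ring_scope.

Section Model.
Variable R : realFieldType.

Definition Gamma (m W : nat) (x : R) : R :=
  2 / (W%:R + 1 + x * W%:R * \sum_(l < m) (2 * x) ^+ l).

(* prod_{j <> i} rho_j, with rho_j = 1 - tau_j (states of the other users,
   frozen by the non-atomic assumption) *)
Definition prod_rho_others (n : nat) (i : 'I_n) (tau : 'I_n -> R) : R :=
  \prod_(j < n | j != i) (1 - tau j).

Definition p_of (n : nat) (i : 'I_n) (tau : 'I_n -> R) : R :=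
  1 - prod_rho_others i tau.

Definition goodput (e : R -> R) (r : R) : R := (1 - e r) * r.

(* stationary tau_i of user i playing (W_i, R_i), others frozen:
   q_i = 1 - (1 - p_i)(1 - e_i(R_i)),  tau_i = Gamma_i(q_i) *)
Definition tau_i (m n : nat) (i : 'I_n) (tau : 'I_n -> R) (e : R -> R)
  (W : nat) (r : R) : R :=
  Gamma m W (1 - (1 - p_of i tau) * (1 - e r)).

(* utility S_i under the non-atomic assumption
   (prod_j rho_j replaced by prod_{j<>i} rho_j in the denominator) *)
Definition S_na (m n : nat) (i : 'I_n) (tau : 'I_n -> R) (e : R -> R)
  (W : nat) (r : R) : R :=
  let rho_i := 1 - tau_i m i tau e W r in
  (1 - rho_i) * prod_rho_others i tau * goodput e r
  / (1 - prod_rho_others i tau).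

Definition best_rate (Rmin Rmax : R) (f : R -> R) (r : R) : Prop :=
  Rmin <= r <= Rmax /\ (forall r', Rmin <= r' <= Rmax -> f r' <= f r).

Definition S_hat (m n : nat) (i : 'I_n) (tau : 'I_n -> R) (e : R -> R)
  (Rstar : nat -> R) (W : nat) : R :=
  S_na m i tau e W (Rstar W).

End Model.

From HB Require Import structures.
From mathcomp Require Import all_boot all_order all_algebra.
Import Order.TTheory GRing.Theory Num.Theory.
Local Open Scope ring_scope.

(* Under the non-atomic assumption, user i's utility at rate r is
   Gamma_W(q(r)) * P * G(r) / (1 - P), where P = prod_{j <> i} rho_j and
   q(r) = 1 - P (1 - e(r)) do not depend on W.  Since q >= 0, the denominator
   of Gamma_W(q) grows with W, so for every fixed rate a larger window strictly
   lowers the utility.  Hence the best response to W' earns strictly less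
   under W' than under W, and still no more under W than W's best response. *)

Lemma Gamma_window_lt (R : realFieldType) (m W W' : nat) (q : R) :
  0 <= q -> (W < W')%N -> Gamma m W' q < Gamma m W q.
Proof.
move=> q_ge0 ltWW'; rewrite /Gamma.
set s := \sum_(l < m) (2 * q) ^+ l.
have s_ge0 : 0 <= s by rewrite sumr_ge0 // => l _; rewrite exprn_ge0 ?mulr_ge0.
rewrite -!mulrA !(mulrC _ s) !mulrA.
have den_gt0 : 0 < W%:R + 1 + q * s * W%:R :> R.
  by rewrite ltr_wpDr ?mulr_ge0 // ltr_wpDl.
have den_lt : W%:R + 1 + q * s * W%:R < W'%:R + 1 + q * s * W'%:R :> R.
  by rewrite ltr_leD ?ltrD2r ?ltr_nat // ler_wpM2l ?mulr_ge0 ?ler_nat ?(ltnW ltWW').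
by rewrite ltr_pM2l // ltf_pV2 ?posrE // (lt_trans den_gt0).
Qed.

Lemma exists_ord_neq (n : nat) (i : 'I_n) : (1 < n)%N -> exists j : 'I_n, j != i.
Proof.
move=> n_gt1; have n_gt0 : (0 < n)%N := ltn_trans (ltnSn 0) n_gt1.
case: (eqVneq (Ordinal n_gt0) i) => [<-|]; last by exists (Ordinal n_gt0).
by exists (Ordinal n_gt1).
Qed.

Lemma prodr_gt0_lt1 (R : numDomainType) (I : finType) (P : pred I) (F : I -> R) :
  (exists j, P j) -> (forall j, P j -> 0 < F j < 1) ->
  0 < \prod_(j | P j) F j < 1.
Proof.
move=> [j0 Pj0] F01.
rewrite prodr_gt0 => [|j /F01 /andP[] //]; rewrite (bigD1 j0) //=.
have /andP[Fj0_gt0 Fj0_lt1] := F01 j0 Pj0.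
have rest01 j : P j && (j != j0) -> 0 <= F j <= 1.
  by case/andP=> /F01 /andP[? ?] _; rewrite !ltW.
by apply: le_lt_trans Fj0_lt1; rewrite ler_piMr ?(ltW Fj0_gt0) ?prodr_ile1.
Qed.

Lemma S_na_window_lt (R : realFieldType) (m n : nat) (i : 'I_n)
    (tau : 'I_n -> R) (e : R -> R) (W W' : nat) (r : R) :
  0 < prod_rho_others i tau < 1 -> 0 <= e r < 1 -> 0 < r -> (W < W')%N ->
  S_na m i tau e W' r < S_na m i tau e W r.
Proof.
set P := prod_rho_others i tau => /andP[P_gt0 P_lt1] /andP[e_ge0 e_lt1] r_gt0 ltWW'.
rewrite /S_na /tau_i /p_of -/P !subKr.
rewrite ltr_pM2r ?invr_gt0 ?subr_gt0 // ltr_pM2r ?mulr_gt0 ?subr_gt0 // ltr_pM2r //.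
apply: Gamma_window_lt => //.
by rewrite subr_ge0 mulr_ile1 ?subr_ge0 ?gerBl ?(ltW P_gt0) ?(ltW P_lt1) ?(ltW e_lt1).
Qed.

Theorem lemma5 (R : realFieldType) (m n : nat) (i : 'I_n)
    (Wo : 'I_n -> nat) (qo : 'I_n -> R)
    (e : R -> R) (Rmin Rmax : R) (Rstar : nat -> R) (W W' : nat) :
  (1 <= m)%N ->
  (1 < n)%N ->
  (forall j, j != i -> 0 <= qo j <= 1) ->
  (forall j, j != i -> 0 < Gamma m (Wo j) (qo j) < 1) ->
  0 < Rmin -> Rmin <= Rmax ->
  (forall r, Rmin <= r <= Rmax -> 0 <= e r < 1) ->
  (forall x y, Rmin <= x -> x <= y -> y <= Rmax -> e x <= e y) ->
  (forall w : nat, best_rate Rmin Rmax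
       (S_na m i (fun j => Gamma m (Wo j) (qo j)) e w) (Rstar w)) ->
  (W < W')%N ->
  S_hat m i (fun j => Gamma m (Wo j) (qo j)) e Rstar W'
  < S_hat m i (fun j => Gamma m (Wo j) (qo j)) e Rstar W.
Proof.
move=> _ n_gt1 _ Gamma01 Rmin_gt0 _ e01 _ best ltWW'.
set tau := fun j => Gamma m (Wo j) (qo j).
have P01 : 0 < prod_rho_others i tau < 1.
  apply: prodr_gt0_lt1; first exact: exists_ord_neq.
  move=> j /Gamma01 /andP[tau_gt0 tau_lt1].
  by rewrite subr_gt0 tau_lt1 ltrBlDr ltrDl.
have [r_range _] := best W'; have [_ best_W] := best W.
rewrite /S_hat; apply: lt_le_trans (best_W _ r_range).
apply: S_na_window_lt => //; first exact: e01.
by case/andP: r_range => /(lt_le_trans Rmin_gt0).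
Qed.
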